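(* Let $\tau$ be an infinite cardinal, let $(G,X,\alpha)$ be a $G$-space, and suppose $G$ is a (topological) subgroup of a product $\Pi=\prod\{G_s:s\in S\}$ of topological groups. Suppose that either (a) the action $\alpha$ is transitive and $\chi(X)\le\tau$, or (b) $(G,X,\alpha)$ is $G$-Tychonoff, $\mathcal U$ is an equiuniformity on $X$ and $w(\mathcal U)\le\tau$. Then there exist $S'\subset S$ with $|S'|\le\tau$ and an action $\gamma:\mathrm{pr}_{S'}(G)\times X\to X$, where $\mathrm{pr}_{S'}:\Pi\to\prod\{G_s:s\in S'\}$ is the projection and $\mathrm{pr}_{S'}(G)$ carries the subspace topology, such that $(\mathrm{pr}_{S'}(G),X,\gamma)$ is a $G$-space with transitive action $\gamma$ in case (a), respectively $(\mathrm{pr}_{S'}(G),X,\gamma)$ is a $G$-space for which $\mathcal U$ is an equiuniformity in case (b); and $(\mathrm{pr}_{S'}|_G,\mathrm{id}):(G,X,\alpha)\to(\mathrm{pr}_{S'}(G),X,\gamma)$ is an equivariant pair of maps.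
   Context: All spaces are Tychonoff and all maps continuous. A $G$-space $(G,X,\alpha)$ is a topological group $G$ with a continuous action $\alpha:G\times X\to X$; it is transitive if $Gx=X$ for $x\in X$. An equivariant pair of maps $(\varphi,\mathrm{id}):(G,X,\alpha)\to(H,X,\gamma)$ is a continuous homomorphism $\varphi:G\to H$ with $\alpha(g,x)=\gamma(\varphi(g),x)$ for all $g,x$. Uniformities are given by families of open covers; $w(\mathcal U)$ is the minimal cardinality of a base of $\mathcal U$. $\mathcal U$ is an equiuniformity for $(G,X,\alpha)$ if it is saturated ($gu\in\mathcal U$ for all $u\in\mathcal U$, $g\in G$) and bounded (for every $u\in\mathcal U$ there are an open neighborhood $O$ of the unit of $G$ and $v\in\mathcal U$ with $\{OV:V\in v\}$ refining $u$). $(G,X,\alpha)$ is $G$-Tychonoff if there is a compactification $bX$ of $X$ with a continuous $G$-action extending $\alpha$. $\chi(X)$ is the character of $X$. *)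

From HB Require Import structures.
From mathcomp Require Import all_boot all_order all_algebra.
From mathcomp Require Import all_classical all_reals topology function_spaces normedtype.
From mathcomp Require Import Rstruct Rstruct_topology.

Set Implicit Arguments.
Unset Strict Implicit.
Unset Printing Implicit Defensive.

Import Order.TTheory GRing.Theory Num.Theory.
Local Open Scope classical_set_scope.
Local Open Scope card_scope.

(** * Topological groups (Hausdorffness is imposed separately as Tychonoff) *)
Record topGroup : Type := TopGroup {
  tg_car :> topologicalType;
  tg_one : tg_car;
  tg_mul : tg_car -> tg_car -> tg_car;
  tg_inv : tg_car -> tg_car;
  tg_mulA : forall x y z, tg_mul x (tg_mul y z) = tg_mul (tg_mul x y) z;
  tg_mul1g : forall x, tg_mul tg_one x = x;
  tg_mulVg : forall x, tg_mul (tg_inv x) x = tg_one;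
  tg_mul_cont : continuous (fun p : tg_car * tg_car => tg_mul p.1 p.2);
  tg_inv_cont : continuous tg_inv }.

Definition tychonoff_space (X : topologicalType) : Prop :=
  accessible_space X /\
  forall (a : X) (B : set X), closed B -> ~ B a ->
    exists f : X -> Rdefinitions.R,
      continuous f /\ f a = 0%R /\ (forall b, B b -> f b = 1%R).

Notation PG K := (prod_topology (fun i => tg_car (K i))).

Section Products.
Variables (I : Type) (K : I -> topGroup).

Definition pone : PG K := fun i => tg_one (K i).
Definition pmul (a b : PG K) : PG K :=
  fun i => tg_mul (a i) (b i).
Definition pinv (a : PG K) : PG K :=
  fun i => tg_inv (a i).

(** [G] is a subgroup of the product; it carries the subspace topology. *)
Definition subgroup (G : set (PG K)) : Prop :=
  [/\ G pone, (forall a b, G a -> G b -> G (pmul a b))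
    & (forall a, G a -> G (pinv a))].

(** [(G, X, alpha)] is a G-space: [G] a (topological) subgroup of the product,
    [alpha : G x X -> X] a continuous action ([alpha] is given as a total
    function; only its values on [G] matter). *)
Definition Gspace (G : set (PG K)) (X : topologicalType)
    (alpha : PG K -> X -> X) : Prop :=
  [/\ subgroup G,
      {within G `*` [set: X], continuous (fun p : PG K * X => alpha p.1 p.2)},
      (forall x, alpha pone x = x)
    & (forall g h x, G g -> G h -> alpha g (alpha h x) = alpha (pmul g h) x)].

Definition transitive_action (G : set (PG K)) (X : Type)
    (alpha : PG K -> X -> X) : Prop :=
  forall x y : X, exists g, G g /\ alpha g x = y.

(** * Uniformities given by families of open covers *)
Definition open_cover (X : topologicalType) (u : set (set X)) : Prop :=
  (forall U, u U -> open U) /\ \bigcup_(U in u) U = [set: X].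

Definition refines (X : Type) (u v : set (set X)) : Prop :=
  forall U, u U -> exists2 V, v V & U `<=` V.

Definition star (X : Type) (A : set X) (u : set (set X)) : set X :=
  \bigcup_(U in [set U | u U /\ U `&` A !=set0]) U.

Definition uniformity_on (X : topologicalType) (UU : set (set (set X))) : Prop :=
  [/\ UU !=set0,
      (forall u, UU u -> open_cover u),
      (forall u v, UU u -> open_cover v -> refines u v -> UU v),
      (forall u v, UU u -> UU v -> exists2 w, UU w & refines w u /\ refines w v)
    & (forall u, UU u -> exists2 v, UU v & refines [set star V v | V in v] u)] /\
  (forall (x : X) (O : set X), nbhs x O ->
     exists2 u, UU u & star [set x] u `<=` O).

Definition weight_le (X : Type) (UU : set (set (set X))) (tau : Type) : Prop :=
  exists B : set (set (set X)),
    [/\ B `<=` UU, B #<= [set: tau] & forall u, UU u -> exists2 v, B v & refines v u].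

Definition character_le (X : topologicalType) (tau : Type) : Prop :=
  forall x : X, exists B : set (set X),
    [/\ B #<= [set: tau], (forall U, B U -> open U /\ U x)
      & forall V, nbhs x V -> exists2 U, B U & U `<=` V].

Definition saturated (G : set (PG K)) (X : Type)
    (alpha : PG K -> X -> X) (UU : set (set (set X))) : Prop :=
  forall u g, UU u -> G g -> UU [set alpha g @` U | U in u].

(** O V = { alpha g y : g in O, y in V } with O = G `&` W an open
    neighbourhood of the unit in (the subspace) G. *)
Definition bounded (G : set (PG K)) (X : Type)
    (alpha : PG K -> X -> X) (UU : set (set (set X))) : Prop :=
  forall u, UU u -> exists W : set (PG K),
    [/\ open W, W pone &
      exists2 v, UU v &
        refines [set [set z | exists g y, [/\ (G `&` W) g, V y & z = alpha g y]]
                | V in v] u].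

Definition equiuniformity (G : set (PG K)) (X : topologicalType)
    (alpha : PG K -> X -> X) (UU : set (set (set X))) : Prop :=
  [/\ uniformity_on UU, saturated G alpha UU & bounded G alpha UU].

Definition embedding (X Y : topologicalType) (e : X -> Y) : Prop :=
  [/\ continuous e, injective e &
      forall U : set X, open U -> exists2 V : set Y, open V & e @` U = V `&` range e].

Definition G_tychonoff (G : set (PG K)) (X : topologicalType)
    (alpha : PG K -> X -> X) : Prop :=
  exists (bX : topologicalType) (e : X -> bX) (beta : PG K -> bX -> bX),
    [/\ compact [set: bX], hausdorff_space bX, embedding e & dense (range e)] /\
    Gspace G beta /\ (forall g x, G g -> beta g (e x) = e (alpha g x)).

End Products.

Definition equivariant_pair (I J : Type) (K : I -> topGroup) (L : J -> topGroup)
    (G : set (PG K)) (H : set (PG L)) (X : Type)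
    (alpha : PG K -> X -> X) (gamma : PG L -> X -> X)
    (phi : PG K -> PG L) : Prop :=
  [/\ {within G, continuous phi},
      (forall g, G g -> H (phi g)),
      (forall g h, G g -> G h -> phi (pmul g h) = pmul (phi g) (phi h))
    & (forall g x, G g -> alpha g x = gamma (phi g) x)].

Definition restr (S : Type) (Gs : S -> topGroup) (S' : set S) :
  {s | S' s} -> topGroup := fun i => Gs (proj1_sig i).

Arguments restr {S} Gs S' _.

Definition prS (S : Type) (Gs : S -> topGroup) (S' : set S)
  (g : PG Gs) : PG (restr Gs S') :=
  fun i => g (proj1_sig i).

Arguments prS {S} Gs S' g _.

From Pilot Require Import Defs.
From HB Require Import structures.
From mathcomp Require Import all_boot all_order all_algebra.
From mathcomp Require Import all_classical all_reals topology function_spaces normedtype.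
From mathcomp Require Import Rstruct Rstruct_topology.
Local Open Scope classical_set_scope.
Local Open Scope card_scope.
Set Implicit Arguments.
Unset Strict Implicit.
Unset Printing Implicit Defensive.

(* Continuity of the action at the points (1, z) of G x X gives, for every
   neighbourhood O of z, a basic neighbourhood W of 1 in the product and a
   neighbourhood V of z with (G `&` W) V inside O; W depends on finitely many
   coordinates.  Say that J controls O at z when W can be taken to be the
   preimage of a neighbourhood of 1 in the subproduct over J.  If J controls
   every neighbourhood of every point, then elements of G with trivial
   J-projection fix every point of the T1 space X, so the action factors
   through pr_J, and the same control property makes the factored action
   continuous.  A controlling J of size at most tau is the union of the finite
   supports attached to the members of a local base at one point (case (a):
   conjugation by an element moving that point to z transports the control to
   z) or of a base of the equiuniformity (case (b): boundedness), and a union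
   of tau finite sets has size at most tau since tau * aleph_0 = tau. *)

Lemma coord_continuous (I : Type) (K : I -> topologicalType) (i : I) :
  continuous (fun f : prod_topology K => f i).
Proof. exact: (@proj_continuous {classic I} K i). Qed.

Lemma continuous_prod (I : Type) (K : I -> topologicalType) (Y : topologicalType)
    (h : Y -> prod_topology K) :
  (forall i, continuous (fun y => h y i)) -> continuous h.
Proof.
move=> hc y; apply/cvg_sup => i.
exact: (@continuous_comp_initial _ Y (K i) (fun f : prod_topology K => f i) h (hc i) y).
Qed.

Section Restriction.
Variables (I : Type) (K : I -> topologicalType).

Definition prod_restr (J : set I) (f : prod_topology K) :
  prod_topology (fun j : {i | J i} => K (sval j)) := fun j => f (sval j).
Arguments prod_restr : clear implicits.

Lemma prod_restr_continuous (J : set I) : continuous (prod_restr J).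
Proof. by apply: continuous_prod => j; exact: coord_continuous. Qed.

Definition finitely_supported (f : prod_topology K) (W : set (prod_topology K)) :=
  exists2 F : set I, finite_set F & forall J, F `<=` J ->
    exists2 W', nbhs (prod_restr J f) W' & prod_restr J @^-1` W' `<=` W.

Lemma finitely_supported_filter f : Filter (finitely_supported f).
Proof.
split.
- exists set0; first exact: finite_set0.
  by move=> J _; exists setT; [exact: filterT|].
- move=> A B [FA fA HA] [FB fB HB]; exists (FA `|` FB); first by rewrite finite_setU.
  move=> J FJ; have [WA nA sA] := HA J (subset_trans (@subsetUl _ _ _) FJ).
  have [WB nB sB] := HB J (subset_trans (@subsetUr _ _ _) FJ).
  by exists (WA `&` WB); [exact: filterI | move=> g [/sA ? /sB ?]].
- move=> A B AB [F fF HF]; exists F => // J FJ.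
  by have [W' nW sW] := HF J FJ; exists W' => // g /sW /AB.
Qed.

(* A filter containing the subbasic neighbourhoods [[set g | A (g i)]] of [f]
   is finer than [nbhs f]. *)
Lemma nbhs_finitely_supported f W : nbhs f W -> finitely_supported f W.
Proof.
have Ff := finitely_supported_filter f.
suff: (finitely_supported f : set_system (prod_topology K)) --> f by apply.
apply/cvg_sup => i U [B [[A oA <-] Afi] BU].
apply: filterS BU _; exists [set i]; first exact: finite_set1.
move=> J iJ; pose j : {i | J i} := exist _ i (iJ i erefl).
exists [set q : prod_topology (fun j : {i | J i} => K (sval j)) | A (q j)] => //.
apply: (@coord_continuous _ (fun j : {i | J i} => K (sval j)) j (prod_restr J f) A).
exact: open_nbhs_nbhs.
Qed.

End Restriction.

Section TopGroupTheory.
Variable K : topGroup.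
Implicit Types x y c : K.

Lemma tg_mulgV x : tg_mul x (tg_inv x) = tg_one K.
Proof.
rewrite -[LHS]tg_mul1g -(tg_mulVg (tg_inv x)) -tg_mulA.
by rewrite (tg_mulA (tg_inv x)) tg_mulVg tg_mul1g tg_mulVg.
Qed.

Lemma tg_mulg1 x : tg_mul x (tg_one K) = x.
Proof. by rewrite -(tg_mulVg x) tg_mulA tg_mulgV tg_mul1g. Qed.

Lemma tg_mul_cvg (T : Type) (F : set_system T) {FF : Filter F} (f g : T -> K) x y :
  f @ F --> x -> g @ F --> y -> (fun t => tg_mul (f t) (g t)) @ F --> tg_mul x y.
Proof. by move=> fx gy; apply: continuous2_cvg fx gy; exact: (@tg_mul_cont K (x, y)). Qed.

Lemma tg_mulr_continuous c : continuous (fun x : K => tg_mul x c).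
Proof. by move=> x; apply: (@tg_mul_cvg _ _ _ id (cst c)); [exact: cvg_id | exact: cvg_cst]. Qed.

Lemma tg_mull_continuous c : continuous (tg_mul c).
Proof. by move=> x; apply: (@tg_mul_cvg _ _ _ (cst c) id); [exact: cvg_cst | exact: cvg_id]. Qed.

Lemma nbhs_translate c (W : set K) :
  nbhs (tg_one K) W -> nbhs c [set q | W (tg_mul q (tg_inv c))].
Proof.
by rewrite -{1}(tg_mulgV c) => W1; exact: (@tg_mulr_continuous (tg_inv c) c _ W1).
Qed.

Lemma nbhs1_conj c (W : set K) :
  nbhs (tg_one K) W -> nbhs (tg_one K) [set q | W (tg_mul (tg_inv c) (tg_mul q c))].
Proof.
move=> W1; have W1c : nbhs (tg_mul (tg_inv c) (tg_mul (tg_one K) c)) W.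
  by rewrite tg_mul1g tg_mulVg.
exact: (@tg_mulr_continuous c _ _ (@tg_mull_continuous (tg_inv c) _ _ W1c)).
Qed.

End TopGroupTheory.

Section ProductGroup.
Variables (I : Type) (K : I -> topGroup).

Lemma pmulA (a b c : PG K) : pmul a (pmul b c) = pmul (pmul a b) c.
Proof. by apply: functional_extensionality_dep => i; exact: tg_mulA. Qed.

Lemma pmul1g (a : PG K) : pmul (pone K) a = a.
Proof. by apply: functional_extensionality_dep => i; exact: tg_mul1g. Qed.

Lemma pmulVg (a : PG K) : pmul (Defs.pinv a) a = pone K.
Proof. by apply: functional_extensionality_dep => i; exact: tg_mulVg. Qed.

Lemma pmul_continuous : continuous (fun p : PG K * PG K => pmul p.1 p.2).
Proof.
apply: continuous_prod => i p; apply: tg_mul_cvg.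
  apply: (@continuous_comp _ _ _ fst (fun f : PG K => f i)); first exact: cvg_fst.
  exact: coord_continuous.
apply: (@continuous_comp _ _ _ snd (fun f : PG K => f i)); first exact: cvg_snd.
exact: coord_continuous.
Qed.

Lemma pinv_continuous : continuous (@Defs.pinv _ K).
Proof.
apply: continuous_prod => i p.
apply: (@continuous_comp _ _ _ (fun f : PG K => f i) (@tg_inv (K i))).
  exact: coord_continuous.
exact: tg_inv_cont.
Qed.

Definition prod_topGroup : topGroup :=
  TopGroup pmulA pmul1g pmulVg pmul_continuous pinv_continuous.

End ProductGroup.

Lemma pmulgV (I : Type) (K : I -> topGroup) (a : PG K) :
  pmul a (Defs.pinv a) = pone K.
Proof. exact: (@tg_mulgV (prod_topGroup K) a). Qed.

Lemma pmulg1 (I : Type) (K : I -> topGroup) (a : PG K) : pmul a (pone K) = a.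
Proof. exact: (@tg_mulg1 (prod_topGroup K) a). Qed.

Lemma countable_setU (T : Type) (A B : set T) :
  countable A -> countable B -> countable (A `|` B).
Proof.
move=> cA cB; rewrite -bigcup2inE; apply: bigcup_countable.
  exact/finite_set_countable/finite_II.
by move=> [|[|n]] //= _; exact: countable0.
Qed.

Section InfiniteTimesNat.
Variable T : pointedType.

Definition nat_blocks (M : set (set T)) :=
  (forall A, M A -> A #= [set: nat]) /\ trivIset M id.

Lemma maximal_nat_blocks_ex :
  exists M, nat_blocks M /\ forall M', M `<` M' -> ~ nat_blocks M'.
Proof.
apply: Zorn_bigcup => C Cblocks Ctot; split.
  by move=> A [M CM MA]; exact: (Cblocks M CM).1.
move=> A B [M CM MA] [M' CM' M'B].
have [MM'|M'M] := Ctot M M' CM CM'.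
  exact: (Cblocks M' CM').2 _ _ (MM' _ MA) M'B.
exact: (Cblocks M CM).2 _ _ MA (M'M _ M'B).
Qed.

Lemma maximal_nat_blocks_cofinite M : nat_blocks M ->
  (forall M', M `<` M' -> ~ nat_blocks M') ->
  finite_set (~` \bigcup_(A in M) A).
Proof.
move=> [Mnat Mdisj] Mmax; apply: contrapT.
move=> /infiniteP/pcard_leP/injfunPex [f fR finj].
pose D := f @` [set: nat].
have DR : D `<=` ~` \bigcup_(A in M) A by move=> _ [n _ <-]; exact: fR.
apply: (Mmax (M `|` [set D])); last split.
- split; first by move=> A MA; left.
  move=> /(_ D (or_intror erefl)) MD.
  have D0 : D (f 0%N) by exists 0%N.
  by apply: (DR _ D0); exists D.
- by move=> A [/Mnat //|->]; exact: inj_card_eq.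
- move=> A B [MA|->] [MB|->] // [x [Ax Bx]].
  + exact: Mdisj (ex_intro _ x (conj Ax Bx)).
  + by exfalso; apply: (DR x Bx); exists A.
  + by exfalso; apply: (DR x Ax); exists B.
Qed.

(* A maximal family of disjoint countably infinite blocks leaves a finite
   remainder, which is absorbed into one of the blocks. *)
Lemma nat_partition_ex : infinite_set [set: T] ->
  exists M, nat_blocks M /\ \bigcup_(A in M) A = [set: T].
Proof.
move=> Tinf; have [M [[Mnat Mdisj] Mmax]] := maximal_nat_blocks_ex.
set R := ~` \bigcup_(A in M) A.
have Rfin : finite_set R by exact: maximal_nat_blocks_cofinite.
have [A0 MA0] : M !=set0.
  apply/set0P/negP => /eqP M0; apply: Tinf; apply: sub_finite_set Rfin.
  by move=> x _ [A]; rewrite M0.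
pose M' := [set A | M A /\ A <> A0] `|` [set A0 `|` R].
have outside A x : M A -> A <> A0 -> A x -> ~ (A0 `|` R) x.
  move=> MA AA0 Ax [A0x|Rx]; last by apply: Rx; exists A.
  by apply: AA0; exact: Mdisj MA MA0 (ex_intro _ x (conj Ax A0x)).
exists M'; split; [split|].
- move=> A [[/Mnat //] _|->]; have A0nat := Mnat _ MA0.
  apply: eq_card_nat.
    by apply: countable_setU; [case/card_eqPle: A0nat | exact: finite_set_countable].
  move=> /(sub_finite_set (@subsetUl _ A0 R)).
  by rewrite (eq_finite_set A0nat); exact: infinite_nat.
- move=> A B [[MA AA0]|->] [[MB BA0]|->] // [x [Ax Bx]].
  + exact: Mdisj MA MB (ex_intro _ x (conj Ax Bx)).
  + by case: (outside A x MA AA0 Ax).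
  + by case: (outside B x MB BA0 Bx).
- apply/seteqP; split => // x _.
  have [[A MA Ax]|Rx] := pselect ((\bigcup_(A in M) A) x); last first.
    by exists (A0 `|` R); [right | right].
  have [AA0|AA0] := pselect (A = A0); last by exists A => //; left.
  by exists (A0 `|` R); [right | left; rewrite -AA0].
Qed.

(* Enumerate each block [A] of a partition of [T] as [e A n] and send
   [(e A n, m)] to [e A (c (n, m))], with [c] a pairing function of [nat]. *)
Lemma card_setXnat_le : infinite_set [set: T] -> [set: T * nat] #<= [set: T].
Proof.
move=> /nat_partition_ex [M [[Mnat Mdisj] Mcover]].
have /choice [blk blkP] : forall t : T, exists A, M A /\ A t.
  by move=> t; have : [set: T] t by []; rewrite -Mcover => -[A MA At]; exists A.
have /choice [e eP] : forall A : set T,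
    exists e : nat -> T, M A -> set_bij [set: nat] A e.
  move=> A; have [MA|nMA] := pselect (M A); last by exists (fun=> point) => /nMA.
  by have /card_esym/pcard_eqP/bijPex [e ?] := Mnat A MA; exists e.
have /choice [idx idxP] : forall t, exists n, e (blk t) n = t.
  move=> t; have [MA At] := blkP t; have [_ _ esurj] := eP _ MA.
  by have [n _ ent] := esurj t At; exists n.
have [c cinj] : exists c : nat * nat -> nat, injective c.
  move: card_nat2; rewrite card_eq_le => /andP[/pcard_injP [c cinj] _].
  by exists c => x y; apply: cinj; rewrite in_setT.
apply/pcard_injP; exists (fun tm => e (blk tm.1) (c (idx tm.1, tm.2))).
move=> [t m] [t' m'] _ _ /= E.
have [MA At] := blkP t; have [MA' At'] := blkP t'.
have [efun einj _] := eP _ MA; have [efun' _ _] := eP _ MA'.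
have same : blk t = blk t'.
  apply: Mdisj MA MA' _; exists (e (blk t) (c (idx t, m))).
  by split; [exact: efun | rewrite E; exact: efun'].
move: E; rewrite -same => /einj; rewrite !in_setT => /(_ isT isT) /cinj [Eidx ->].
by rewrite -(idxP t) -(idxP t') -same Eidx.
Qed.

End InfiniteTimesNat.

Lemma card_bigcup_finite_le (T : pointedType) (I A : Type) (D : set I)
    (F : I -> set A) :
  infinite_set [set: T] -> D #<= [set: T] -> (forall i, D i -> finite_set (F i)) ->
  \bigcup_(i in D) F i #<= [set: T].
Proof.
elim/Ppointed: I => I in D F *.
  by rewrite (empty_eq0 D) bigcup_set0 => *; exact: card_ge0.
move=> Tinf /pcard_injP [d dinj] Ffin.
have /pcard_injP [m minj] := card_setXnat_le Tinf.
have /choice [k kP] : forall i, exists k : A -> nat, D i -> {in F i &, injective k}.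
  move=> i; have [Di|nDi] := pselect (D i); last by exists (fun=> 0%N) => /nDi.
  by have /finite_set_countable/pcard_injP [k ?] := Ffin i Di; exists k.
have /choice [ix ixP] : forall a, exists i, (\bigcup_(i in D) F i) a -> D i /\ F i a.
  move=> a; have [[i Di Fia]|na] := pselect ((\bigcup_(i in D) F i) a).
    by exists i.
  by exists point => /na.
apply/pcard_injP; exists (fun a => m (d (ix a), k (ix a) a)).
move=> a b /set_mem /ixP [Da Fa] /set_mem /ixP [Db Fb] /minj.
rewrite !in_setT => /(_ isT isT) [/dinj].
rewrite !inE => /(_ Da Db) Eab; rewrite -Eab in Fb *.
by move/(kP _ Da); rewrite !inE; apply.
Qed.

Definition act_image (I : Type) (K : I -> topGroup) (G : set (PG K)) (X : Type)
    (alpha : PG K -> X -> X) (W : set (PG K)) (V : set X) : set X :=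
  [set z | exists g y, [/\ (G `&` W) g, V y & z = alpha g y]].

Lemma act_imageS (I : Type) (K : I -> topGroup) (G : set (PG K)) (X : Type)
    (alpha : PG K -> X -> X) (W1 W2 : set (PG K)) (V : set X) :
  W1 `<=` W2 -> act_image G alpha W1 V `<=` act_image G alpha W2 V.
Proof.
by move=> W12 _ [g [y [[Gg W1g] Vy ->]]]; exists g, y; split => //; split => //; exact: W12.
Qed.

Lemma refines_trans (X : Type) (u v w : set (set X)) :
  refines u v -> refines v w -> refines u w.
Proof.
move=> uv vw U uU; have [V vV UV] := uv U uU; have [W wW VW] := vw V vV.
by exists W => //; exact: subset_trans VW.
Qed.

Section GspaceControl.
Variables (S : Type) (Gs : S -> topGroup) (G : set (PG Gs)) (X : topologicalType)
  (alpha : PG Gs -> X -> X).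
Hypothesis HG : Gspace G alpha.

Lemma Gspace_nbhs g x (O : set X) : G g -> nbhs (alpha g x) O ->
  exists2 W, nbhs g W &
    exists2 V, nbhs x V & forall h y, G h -> W h -> V y -> O (alpha h y).
Proof.
move=> Gg nO; have [_ /subspace_continuousP acont _ _] := HG.
have [[P Q] /= [nP nQ] PQ] := acont (g, x) (conj Gg I) O nO.
exists P => //; exists Q => // h y Gh Ph Qy.
exact: (PQ (h, y) (conj Ph Qy) (conj Gh I)).
Qed.

Lemma Gspace_continuous g : G g -> continuous (alpha g).
Proof.
move=> Gg x O nO; have [W nW [V nV WV]] := Gspace_nbhs Gg nO.
by apply: filterS nV => y; exact: WV Gg (nbhs_singleton nW).
Qed.

Definition controlled_at (J : set S) (z : X) (O : set X) :=
  exists2 W' : set (PG (restr Gs J)), nbhs (pone _) W' &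
    exists2 V, nbhs z V &
      forall h y, G h -> W' (prS Gs J h) -> V y -> O (alpha h y).

Lemma controlled_atS J z (O O' : set X) :
  O `<=` O' -> controlled_at J z O -> controlled_at J z O'.
Proof.
by move=> OO' [W' nW [V nV WV]]; exists W' => //; exists V => // *; apply/OO'/WV.
Qed.

Lemma controlled_at_finite z O : nbhs z O ->
  exists2 F, finite_set F & forall J, F `<=` J -> controlled_at J z O.
Proof.
have [[G1 _ _] _ act1 _] := HG.
rewrite -{1}(act1 z) => /(Gspace_nbhs G1) [W nW [V nV WV]].
have [F Ffin FW] := nbhs_finitely_supported nW.
exists F => // J FJ; have [W' nW' W'W] := FW J FJ.
by exists W' => //; exists V => // h y Gh W'h; apply: WV => //; exact: W'W.
Qed.

Lemma controlled_at_act J z O k : G k ->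
  controlled_at J z (alpha k @^-1` O) -> controlled_at J (alpha k z) O.
Proof.
have [[_ GM GV] _ act1 actM] := HG.
move=> Gk [W' nW' [V nV WV]]; set pk := prS Gs J k.
exists [set q | W' (pmul (Defs.pinv pk) (pmul q pk))].
  exact: (@nbhs1_conj (prod_topGroup (restr Gs J))).
exists (alpha (Defs.pinv k) @^-1` V).
  by apply: Gspace_continuous (GV _ Gk) _ _ _; rewrite actM ?pmulVg ?act1 //; exact: GV.
move=> h y Gh W'h Vy; set h' := pmul (Defs.pinv k) (pmul h k).
have Gh' : G h' := GM _ _ (GV _ Gk) (GM _ _ Gh Gk).
have := WV h' _ Gh' W'h Vy.
rewrite /= (actM _ _ _ Gk Gh') (actM _ _ _ (GM _ _ Gk Gh') (GV _ Gk)).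
by rewrite /h' !pmulA pmulgV pmul1g -pmulA pmulgV pmulg1.
Qed.

Definition controlled_cover (J : set S) (UU : set (set (set X))) (u : set (set X)) :=
  exists2 W' : set (PG (restr Gs J)), nbhs (pone _) W' &
    exists2 v, UU v & refines [set act_image G alpha (prS Gs J @^-1` W') V | V in v] u.

Lemma controlled_coverS J UU (u u' : set (set X)) :
  refines u u' -> controlled_cover J UU u -> controlled_cover J UU u'.
Proof.
by move=> uu' [W' nW' [v Uv vu]]; exists W' => //; exists v => //; exact: refines_trans uu'.
Qed.

Lemma controlled_cover_finite UU u : bounded G alpha UU -> UU u ->
  exists2 F, finite_set F & forall J, F `<=` J -> controlled_cover J UU u.
Proof.
move=> Hbd Uu; have [W [oW W1 [v Uv vu]]] := Hbd u Uu.
have [F Ffin FW] := nbhs_finitely_supported (open_nbhs_nbhs (conj oW W1)).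
exists F => // J FJ; have [W' nW' W'W] := FW J FJ.
exists W' => //; exists v => //; apply: refines_trans vu => _ [V vV <-].
by exists (act_image G alpha W V); [exists V | exact: act_imageS].
Qed.

Lemma controlled_cover_controlled_at J UU z O : uniformity_on UU ->
  (forall u, UU u -> controlled_cover J UU u) -> nbhs z O -> controlled_at J z O.
Proof.
have [[G1 _ _] _ act1 _] := HG.
move=> [[_ Ucov _ _ _] Ustar] Jctrl nO.
have [u Uu uO] := Ustar z O nO; have [W' nW' [v Uv vu]] := Jctrl u Uu.
have [vopen vcover] := Ucov v Uv.
have [V vV Vz] : (\bigcup_(V in v) V) z by rewrite vcover.
exists W' => //; exists V; first exact: open_nbhs_nbhs (conj (vopen V vV) Vz).
move=> h y Gh W'h Vy; have [U uU sub] := vu _ (ex_intro2 _ _ V vV erefl).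
apply: uO; exists U; last by apply: sub; exists h, y.
split => //; exists z; split => //; apply: sub; exists (pone Gs), z.
by split; [split => //; exact: nbhs_singleton nW' | | rewrite act1].
Qed.

End GspaceControl.

Section InducedAction.
Variables (S : Type) (Gs : S -> topGroup) (G : set (PG Gs)) (X : topologicalType)
  (alpha : PG Gs -> X -> X) (J : set S).
Local Notation pr := (prS Gs J).

(* Off [pr @` G] the induced action is the identity. *)
Definition induced_action (p : PG (restr Gs J)) : X -> X :=
  match pselect (exists g, G g /\ pr g = p) with
  | left e => alpha (sval (cid e))
  | right _ => id
  end.

Hypothesis HG : Gspace G alpha.
Hypothesis T1 : accessible_space X.
Hypothesis Jcontrol : forall z O, nbhs z O -> controlled_at G alpha J z O.

Lemma controlled_kernel g x : G g -> pr g = pone _ -> alpha g x = x.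
Proof.
move=> Gg pg; apply: contrapT => ne.
have nO : nbhs x (~` [set alpha g x]).
  apply: open_nbhs_nbhs; split; last by move/esym.
  exact/closed_openC/accessible_closed_set1.
have [W' nW' [V nV WV]] := Jcontrol nO.
by apply: (WV g x Gg); [rewrite pg; exact: nbhs_singleton | exact: nbhs_singleton |].
Qed.

Lemma controlled_fiber g g' x :
  G g -> G g' -> pr g = pr g' -> alpha g x = alpha g' x.
Proof.
have [[_ GM GV] _ _ actM] := HG.
move=> Gg Gg' gg'; set m := pmul (Defs.pinv g) g'.
have Gm : G m := GM _ _ (GV _ Gg) Gg'.
have -> : g' = pmul g m by rewrite /m pmulA pmulgV pmul1g.
rewrite -actM // (controlled_kernel x Gm) //.
have -> : pr m = pmul (Defs.pinv (pr g)) (pr g') by [].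
by rewrite gg' pmulVg.
Qed.

Lemma induced_actionE g x : G g -> induced_action (pr g) x = alpha g x.
Proof.
move=> Gg; rewrite /induced_action; case: pselect => [e|]; last by case; exists g.
by case: (cid e) => g' [Gg' g'g] /=; exact: controlled_fiber.
Qed.

Lemma induced_Gspace : Gspace (pr @` G) induced_action.
Proof.
have [[G1 GM GV] _ act1 actM] := HG.
split.
- split; first by exists (pone Gs).
  + by move=> _ _ [a Ga <-] [b Gb <-]; exists (pmul a b) => //; exact: GM.
  + by move=> _ [a Ga <-]; exists (Defs.pinv a) => //; exact: GV.
- apply/subspace_continuousP => -[p z] [[g Gg /= <-] _] O /=.
  rewrite /from_subspace /= induced_actionE // => nO.
  have [W' nW' [V nV WV]] := Jcontrol nO.
  exists ([set q | W' (pmul q (Defs.pinv (pr g)))], alpha g @^-1` V).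
    split; first exact: (@nbhs_translate (prod_topGroup (restr Gs J))).
    by apply: (Gspace_continuous HG Gg).
  move=> [q y] /= [W'q Vy] [[h Gh /= hq] _]; subst q.
  have Ghg : G (pmul h (Defs.pinv g)) := GM _ _ Gh (GV _ Gg).
  rewrite induced_actionE //.
  have -> : h = pmul (pmul h (Defs.pinv g)) g by rewrite -pmulA pmulVg pmulg1.
  by rewrite -actM //; exact: WV.
- by move=> x; rewrite (induced_actionE x G1).
- move=> _ _ x [g Gg <-] [h Gh <-]; rewrite !induced_actionE //.
  have -> : pmul (pr g) (pr h) = pr (pmul g h) by [].
  by rewrite actM // induced_actionE //; exact: GM.
Qed.

Lemma induced_equivariant :
  equivariant_pair G (pr @` G) alpha induced_action pr.
Proof.
split => [|g Gg|//|g x Gg]; last by rewrite induced_actionE.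
- exact/continuous_subspaceT/prod_restr_continuous.
- by exists g.
Qed.

Lemma induced_transitive :
  transitive_action G alpha -> transitive_action (pr @` G) induced_action.
Proof.
move=> Htr x y; have [g [Gg <-]] := Htr x y.
by exists (pr g); split; [exists g | exact: induced_actionE].
Qed.

Lemma induced_equiuniformity UU : equiuniformity G alpha UU ->
  (forall u, UU u -> controlled_cover G alpha J UU u) ->
  equiuniformity (pr @` G) induced_action UU.
Proof.
move=> [Uunif Usat _] Jctrl; split => //.
  move=> u _ Uu [g Gg <-].
  by rewrite (funext (fun x => induced_actionE x Gg)); exact: Usat.
move=> u Uu; have [W' nW' [v Uv vu]] := Jctrl u Uu.
move: nW'; rewrite nbhsE => -[W [oW W1] WW'].
exists W; split => //; exists v => //; apply: refines_trans vu => _ [V vV <-].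
exists (act_image G alpha (pr @^-1` W') V); first by exists V.
move=> _ [_ [y [[[g Gg <-] Wg] Vy ->]]].
by rewrite induced_actionE //; exists g, y; split => //; split => //; exact: WW'.
Qed.

End InducedAction.

Section SmallSupport.
Variables (tau : pointedType) (S : Type) (Gs : S -> topGroup) (G : set (PG Gs))
  (X : topologicalType) (alpha : PG Gs -> X -> X).
Hypothesis Tinf : infinite_set [set: tau].
Hypothesis HG : Gspace G alpha.

Lemma transitive_controlled_support :
  transitive_action G alpha -> character_le X tau ->
  exists2 J : set S, J #<= [set: tau] &
    forall z O, nbhs z O -> controlled_at G alpha J z O.
Proof.
move=> Htr Hchi; have [[x0 _]|noX] := pselect (exists x : X, True); last first.
  by exists set0; [exact: card_ge0 | move=> z; case: noX; exists z].
have [B [Bcard Bopen Bbase]] := Hchi x0.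
have /choice [F FP] : forall U, exists F : set S,
    B U -> finite_set F /\ forall J, F `<=` J -> controlled_at G alpha J x0 U.
  move=> U; have [BU|nBU] := pselect (B U); last by exists set0 => /nBU.
  have [oU Ux0] := Bopen U BU.
  by have [F ? ?] := controlled_at_finite HG (open_nbhs_nbhs (conj oU Ux0)); exists F.
exists (\bigcup_(U in B) F U); first by apply: card_bigcup_finite_le => // U /FP [].
move=> z O; have [k [Gk <-]] := Htr x0 z => nO.
have [U BU UO] := Bbase _ (Gspace_continuous HG Gk nO).
apply: (controlled_at_act HG Gk); apply: controlled_atS UO _.
by apply: (FP U BU).2; exact: bigcup_sup.
Qed.

Lemma bounded_controlled_support UU :
  bounded G alpha UU -> weight_le UU tau ->
  exists2 J : set S, J #<= [set: tau] &
    forall u, UU u -> controlled_cover G alpha J UU u.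
Proof.
move=> Hbd [B [BU Bcard Bbase]].
have /choice [F FP] : forall b, exists F : set S,
    B b -> finite_set F /\ forall J, F `<=` J -> controlled_cover G alpha J UU b.
  move=> b; have [Bb|nBb] := pselect (B b); last by exists set0 => /nBb.
  by have [F ? ?] := controlled_cover_finite Hbd (BU b Bb); exists F.
exists (\bigcup_(b in B) F b); first by apply: card_bigcup_finite_le => // b /FP [].
move=> u Uu; have [b Bb bu] := Bbase u Uu.
apply: controlled_coverS bu _; apply: (FP b Bb).2; exact: bigcup_sup.
Qed.

End SmallSupport.

Theorem proposition3p2 (tau : Type) (S : Type) (Gs : S -> topGroup)
    (G : set (PG Gs)) (X : topologicalType) (alpha : PG Gs -> X -> X)
    (UU : set (set (set X))) :
  infinite_set [set: tau] ->
  (forall s, tychonoff_space (Gs s)) -> tychonoff_space X ->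
  Gspace G alpha ->
  (* case (a) *)
  ((transitive_action G alpha /\ character_le X tau) ->
    exists (S' : set S) (gamma : PG (restr Gs S') -> X -> X),
      [/\ S' #<= [set: tau],
          Gspace (prS Gs S' @` G) gamma,
          transitive_action (prS Gs S' @` G) gamma
        & equivariant_pair G (prS Gs S' @` G) alpha gamma (prS Gs S')]) /\
  (* case (b) *)
  ((G_tychonoff G alpha /\ equiuniformity G alpha UU /\ weight_le UU tau) ->
    exists (S' : set S) (gamma : PG (restr Gs S') -> X -> X),
      [/\ S' #<= [set: tau],
          Gspace (prS Gs S' @` G) gamma,
          equiuniformity (prS Gs S' @` G) gamma UU
        & equivariant_pair G (prS Gs S' @` G) alpha gamma (prS Gs S')]).
Proof.
elim/Ppointed: tau => tau Tinf.
  by case: Tinf; rewrite empty_eq0; exact: finite_set0.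
move=> _ [T1 _] HG; split.
  move=> [Htr Hchi].
  have [J Jcard Jctrl] := transitive_controlled_support Tinf HG Htr Hchi.
  exists J, (@induced_action _ _ G _ alpha J); split => //.
  - exact: induced_Gspace.
  - exact: induced_transitive.
  - exact: induced_equivariant.
move=> [_ [Heq Hw]]; have [Uunif _ Hbd] := Heq.
have [J Jcard Jbd] := bounded_controlled_support Tinf Hbd Hw.
have Jctrl z O := controlled_cover_controlled_at HG (z := z) (O := O) Uunif Jbd.
exists J, (@induced_action _ _ G _ alpha J); split => //.
- exact: induced_Gspace.
- exact: induced_equiuniformity.
- exact: induced_equivariant.
Qed.
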